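(* Let $\mathcal G=\langle V=V_{\mathrm{Min}}\uplus V_{\mathrm{Max}}, V_T, A, E, \omega\rangle$ be a finite weighted game and $c\colon V_T\to\mathbb Z$. Assume that the subgraph induced by $V\setminus V_T$ is strongly connected, that every cycle all of whose vertices lie in $V\setminus V_T$ has positive weight, and that no vertex has value $+\infty$ (with respect to $c$). Let $n=|V\setminus V_T|$. Define $\vec x^0$ by $\vec x^0_v=c(v)$ for $v\in V_T$ and $\vec x^0_v=+\infty$ for $v\in V\setminus V_T$, and $\vec x^i=F(\vec x^{i-1})$ for $i>0$. Then $\vec x^{n+k}=\vec x^n$ for all $k\ge 0$.
   Context: A weighted game has vertices $V$ partitioned into vertices of Min and of Max, targets $V_T\subseteq V_{\mathrm{Min}}$, alphabet $A$, edges $E\subseteq V\times A\times V$, weights $\omega\colon E\to\mathbb Z$, and is deadlock-free (every vertex has an outgoing edge) and deterministic (for each $(v,a)$ at most one $v'$ with $(v,a,v')\in E$). A cycle is a finite sequence of consecutive edges starting and ending at the same vertex (length $\ge1$); its weight is the sum of its edge weights. Strategies, outcomes and values: a strategy of a player chooses, after each finite play ending in one of its vertices, a letter of an outgoing edge; with target values $c\colon V_T\to\mathbb Z$, the weight of a play is $+\infty$ if it never visits $V_T$, and otherwise the sum of the weights of its edges up to the first visit of some $t\in V_T$ plus $c(t)$; the value of $v$ is $\inf_{\sigma_{\mathrm{Min}}}\sup_{\sigma_{\mathrm{Max}}}$ (equal to $\sup_{\sigma_{\mathrm{Max}}}\inf_{\sigma_{\mathrm{Min}}}$) of the weight of the outcome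 from $v$. The operator $F\colon(\mathbb Z\cup\{-\infty,+\infty\})^V\to(\mathbb Z\cup\{-\infty,+\infty\})^V$ is defined by $F(\vec x)_v=c(v)$ if $v\in V_T$, $F(\vec x)_v=\min_{e=(v,a,v')\in E}\omega(e)+\vec x_{v'}$ if $v\in V_{\mathrm{Min}}\setminus V_T$, and $F(\vec x)_v=\max_{e=(v,a,v')\in E}\omega(e)+\vec x_{v'}$ if $v\in V_{\mathrm{Max}}$. *)

From HB Require Import structures.
From mathcomp Require Import all_boot all_order all_algebra.
From mathcomp Require Import boolp classical_sets constructive_ereal ereal.
Set Implicit Arguments. Unset Strict Implicit. Unset Printing Implicit Defensive.
Import Order.TTheory GRing.Theory Num.Theory.
Local Open Scope ring_scope.
Local Open Scope ereal_scope.

(* A finite weighted game: vertex type V (finite), alphabet A (finite),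
   Min vertices VMin (Max vertices are the complement), targets VT,
   edges E : {set V * A * V}, weights omega : V * A * V -> int
   (only its values on E matter). Edge e = (v, a, v'): e.1.1 = v,
   e.1.2 = a, e.2 = v'. *)

Section Game.
Variables (V A : finType) (VMin VT : {set V}) (E : {set V * A * V})
          (omega : V * A * V -> int).

Definition edge := (V * A * V)%type.

Definition deadlock_free : Prop := forall v : V, exists a v', (v, a, v') \in E.

Definition deterministic : Prop :=
  forall (v : V) (a : A) (v1 v2 : V), (v, a, v1) \in E -> (v, a, v2) \in E -> v1 = v2.

Fixpoint is_hist (u : V) (es : seq edge) : bool :=
  if es is e :: es' then [&& e \in E, e.1.1 == u & is_hist e.2 es'] else true.

Definition hlast (u : V) (es : seq edge) : V := last u [seq e.2 | e <- es].

Definition is_cycle (u : V) (es : seq edge) : bool :=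
  [&& es != [::], is_hist u es & hlast u es == u].

Definition cycle_weight (es : seq edge) : int := \sum_(e <- es) omega e.

Definition induced_edge (S : {set V}) : rel V :=
  fun u w => [&& u \in S, w \in S & [exists a, (u, a, w) \in E]].

Definition strongly_connected_induced (S : {set V}) : Prop :=
  forall u w, u \in S -> w \in S -> connect (induced_edge S) u w.

(* Strategies: after a finite play (start vertex, sequence of edges)
   choose a letter. *)
Definition strategy := V -> seq edge -> A.

Definition valid_strategy (P : {set V}) (s : strategy) : Prop :=
  forall v0 es, is_hist v0 es -> hlast v0 es \in P ->
    exists v', (hlast v0 es, s v0 es, v') \in E.

Definition valid_Min (s : strategy) := valid_strategy VMin s.
Definition valid_Max (s : strategy) := valid_strategy (~: VMin) s.

Definition outcome (sMin sMax : strategy) (v : V) (rho : nat -> edge) : Prop :=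
  [/\ (rho 0%N).1.1 = v,
      forall i, rho i \in E,
      forall i, (rho i).2 = (rho i.+1).1.1 &
      forall i, (rho i).1.2 =
        (if (rho i).1.1 \in VMin then sMin else sMax) v [seq rho j | j <- iota 0 i]].

Variable c : V -> int. (* target values, only used on VT *)

Definition play_weight (rho : nat -> edge) : \bar rat :=
  match pselect (exists i, (rho i).1.1 \in VT) with
  | left H =>
      let i := ex_minn H in
      (((\sum_(j < i) omega (rho j) + c (rho i).1.1)%R)%:~R)%:E
  | right _ => +oo
  end.

Definition game_value (v : V) : \bar rat :=
  ereal_inf [set ereal_sup [set play_weight rho | rho in
                  [set rho | exists sMax, valid_Max sMax /\ outcome sMin sMax v rho]]
            | sMin in valid_Min].

Definition Fop (x : V -> \bar int) (v : V) : \bar int :=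
  if v \in VT then (c v)%:E
  else if v \in VMin then
    \big[Order.min/+oo]_(e in E | e.1.1 == v) ((omega e)%:E + x e.2)
  else
    \big[Order.max/-oo]_(e in E | e.1.1 == v) ((omega e)%:E + x e.2).

Definition x0 (v : V) : \bar int := if v \in VT then (c v)%:E else +oo.

Definition xiter (i : nat) : V -> \bar int := iter i Fop x0.

End Game.

From HB Require Import structures.
From mathcomp Require Import all_boot all_order all_algebra.
From mathcomp Require Import boolp classical_sets constructive_ereal ereal.
Set Implicit Arguments. Unset Strict Implicit. Unset Printing Implicit Defensive.
Import Order.TTheory GRing.Theory Num.Theory.
Local Open Scope ring_scope.
Local Open Scope ereal_scope.

(* The iterates x^i decrease pointwise.  If x^(n+1)(v) < x^n(v), follow from v
   an edge witnessing the drop of F: its target again drops one level lower.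
   Repeating n times gives a path through n+1 non-target vertices (a target
   never drops), hence a cycle in V \ VT.  Along the path the weights telescope
   against the iterates, and monotonicity of the iterates then forces the
   cycle to have non-positive weight, contradicting the hypothesis. *)

Lemma uniq_size_le_card (T : finType) (B : {set T}) (s : seq T) :
  uniq s -> {subset s <= B} -> (size s <= #|B|)%N.
Proof. by move=> /card_uniqP <- sB; apply/subset_leq_card/fintype.subsetP. Qed.

Section Histories.
Variables V A : finType.

Lemma mem_trace_prefix (u w : V) (es : seq (edge V A)) :
  w \in [seq e.2 | e <- es] ->
  exists es1 es2, [/\ es = es1 ++ es2, es1 != [::] & hlast u es1 = w].
Proof.
elim: es u => [|e es IH] u //=; rewrite inE.
case/orP=> [/eqP ->|/(IH e.2)[es1 [es2 [-> _ <-]]]]; first by exists [:: e], es.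
by exists (e :: es1), es2.
Qed.

Lemma trace_not_uniq_cycle (u : V) (es : seq (edge V A)) :
  ~~ uniq (u :: [seq e.2 | e <- es]) ->
  exists es1 cyc es2,
    [/\ es = es1 ++ cyc ++ es2, cyc != [::] & hlast (hlast u es1) cyc = hlast u es1].
Proof.
elim: es u => [|e es IH] u //; rewrite cons_uniq negb_and negbK.
case/orP=> [/(mem_trace_prefix u)[cyc [es2 [-> ne cl]]]|].
  by exists [::], cyc, es2.
case/(IH e.2)=> es1 [cyc [es2 [-> ne cl]]].
by exists (e :: es1), cyc, es2.
Qed.

End Histories.

Section ValueIteration.
Variables (V A : finType) (VMin VT : {set V}) (E : {set V * A * V})
          (omega : V * A * V -> int) (c : V -> int).
Hypothesis deadlock : deadlock_free E.

Local Notation F := (Fop VMin VT E omega c).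
Local Notation x := (xiter VMin VT E omega c).

Lemma xiter_target i t : t \in VT -> x i t = (c t)%:E.
Proof. by move=> tT; case: i => [|i]; rewrite /xiter /= ?/x0 /Fop tT. Qed.

Lemma le_Fop (y z : V -> \bar int) v : (forall w, y w <= z w) -> F y v <= F z v.
Proof.
move=> yz; rewrite /Fop; case: ifP => // _; case: ifP => _.
  by apply: le_bigmin2 => e _; apply: leeD2l.
by apply: le_bigmax2 => e _; apply: leeD2l.
Qed.

Lemma xiterS_le i v : x i.+1 v <= x i v.
Proof.
elim: i v => [|i IH] v; last exact: le_Fop.
by rewrite /xiter /= /x0 /Fop; case: ifP => // _; apply: leey.
Qed.

Lemma xiter_antitone i j v : (i <= j)%N -> x j v <= x i v.
Proof.
move=> /subnK <-; elim: (j - i)%N => // k IH.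
by rewrite addSn; apply: le_trans IH; apply: xiterS_le.
Qed.

Lemma xiter_neqNy i v : x i v != -oo.
Proof.
elim: i v => [|i IH] v; first by rewrite /xiter /= /x0; case: ifP.
have edge_neqNy e : (omega e)%:E + x i e.2 != -oo.
  by move: (IH e.2); case: (x i e.2).
rewrite /xiter iterS /Fop; case: ifP => // _; case: ifP => _.
  by elim/big_ind: _ => // a b; rewrite -!ltNye lt_min => -> ->.
have [a [w Evw]] := deadlock v.
rewrite (bigD1 (v, a, w)) /=; last by rewrite Evw eqxx.
by rewrite -ltNye lt_max ltNye edge_neqNy.
Qed.

Lemma Fop_lt_edge (y z : V -> \bar int) v :
  F y v < F z v ->
  exists a w, [/\ (v, a, w) \in E, (omega (v, a, w))%:E + y w <= F y v & y w < z w].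
Proof.
move=> yz; have vT : v \notin VT by apply: contraTN yz => vT; rewrite /Fop vT ltxx.
have [a0 [w0 Ev0]] := deadlock v.
pose P e := (e \in E) && (e.1.1 == v).
have P0 : P (v, a0, w0) by rewrite /P Ev0 eqxx.
suff [[[v' a] w] /andP[Ee /eqP /= ev] [ey ez]] :
    exists2 e, P e & (omega e)%:E + y e.2 <= F y v /\ F y v < (omega e)%:E + z e.2.
  subst v'; exists a, w; split => //.
  by rewrite -(lteD2lE (x := (omega (v, a, w))%:E)) // (le_lt_trans ey ez).
move: yz; rewrite /Fop (negbTE vT); case: ifP => _ yz.
- have [e Pe ye] := eq_bigmin (x := +oo) _ _ (fun e => (omega e)%:E + y e.2) P0
    (fun e _ => leey _).
  exists e => //; split; first by rewrite ye.
  by apply: lt_le_trans yz _; apply: bigmin_le_cond.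
- have [e Pe ze] := eq_bigmax (x := -oo) _ _ (fun e => (omega e)%:E + z e.2) P0
    (fun e _ => leNye _).
  exists e => //; rewrite -ze; split => //.
  exact: le_bigmax_cond _ (fun e => (omega e)%:E + y e.2) Pe.
Qed.

Definition drops (m : nat) (v : V) : bool := x m.+1 v < x m v.

Lemma drops_nontarget m v : drops m v -> v \notin VT.
Proof. by apply: contraTN => vT; rewrite /drops !xiter_target // ltxx. Qed.

Lemma drops_succ_edge m v :
  drops m.+1 v ->
  exists a w, [/\ (v, a, w) \in E, (omega (v, a, w))%:E + x m.+1 w <= x m.+2 v
                & drops m w].
Proof. by move=> /(@Fop_lt_edge (x m.+1) (x m))[a [w []]]; exists a, w. Qed.

(* A path u = u_0, ..., u_k along which u_j drops at level m + k - j and the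
   edge weights are dominated by the differences of the iterates. *)
Fixpoint descending (m : nat) (u : V) (es : seq (edge V A)) : bool :=
  if es is e :: es' then
    let l := (m + size es')%N in
    [&& e \in E, e.1.1 == u, drops l u,
        (omega e)%:E + x l e.2 <= x l.+1 u & descending m e.2 es']
  else true.

Lemma descending_hist m u es : descending m u es -> is_hist E u es.
Proof. by elim: es u => //= e es IH u /and5P[-> -> _ _ /IH]. Qed.

Lemma descending_nontarget m u es :
  descending m u es -> all (fun e => e.1.1 \notin VT) es.
Proof.
by elim: es u => //= e es IH u /and5P[_ /eqP -> /drops_nontarget -> _ /IH].
Qed.

Lemma descending_trace_nontarget m u es :
  descending m u es -> hlast u es \notin VT ->
  all (fun w => w \notin VT) (u :: [seq e.2 | e <- es]).
Proof.
elim: es u => [|e es IH] u /=; first by rewrite andbT.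
by case/and5P=> _ /eqP <- /drops_nontarget -> _ /IH.
Qed.

Lemma descending_cat m u es1 es2 :
  descending m u (es1 ++ es2) =
  descending (m + size es2) u es1 && descending m (hlast u es1) es2.
Proof.
elim: es1 u => //= e es1 IH u.
by rewrite IH size_cat addnA [(m + size es1 + _)%N]addnAC -!andbA.
Qed.

Lemma descending_weight m u es :
  descending m u es ->
  (cycle_weight omega es)%:E + x m (hlast u es) <= x (m + size es) u.
Proof.
rewrite /cycle_weight; elim: es u => [|e es IH] u /=.
  by rewrite big_nil add0e addn0.
case/and5P=> _ _ _ ee /IH des; rewrite big_cons EFinD -addeA addnS.
by apply: le_trans ee; apply: leeD2l.
Qed.

Lemma descending_cycle_weight_le0 m u es :
  descending m u es -> hlast u es = u -> (cycle_weight omega es <= 0)%R.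
Proof.
case: es => [|e es] des cl; first by rewrite /cycle_weight big_nil.
have W := descending_weight des; rewrite cl in W.
have M : x (m + size (e :: es)) u <= x m u by apply: xiter_antitone; apply: leq_addr.
have top_lty : x (m + size (e :: es)) u < +oo.
  case/and5P: des => _ _ + _ _; rewrite /drops addnS => /lt_le_trans.
  by apply; apply: leey.
case: (x m u) W M (xiter_neqNy m u) => [r | |] // W M _.
  by have := le_trans W M; rewrite -EFinD lee_fin gerDr.
by move: (le_lt_trans W top_lty); rewrite addey // ltxx.
Qed.

Lemma drops_descending_path m k v :
  drops (m + k) v ->
  exists es, [/\ size es = k, descending m.+1 v es & drops m (hlast v es)].
Proof.
elim: k v => [|k IH] v; first by rewrite addn0 => dv; exists [::].
rewrite addnS => dv; have [a [w [Evw ew dw]]] := drops_succ_edge dv.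
have [es [sz des dl]] := IH w dw.
by exists ((v, a, w) :: es); rewrite /= sz addSn Evw eqxx dv ew des.
Qed.

Lemma xiter_card_fixpoint v :
  (forall (u : V) (es : seq (V * A * V)), is_cycle E u es ->
     all (fun e => e.1.1 \notin VT) es -> (0 < cycle_weight omega es)%R) ->
  x #|~: VT|.+1 v = x #|~: VT| v.
Proof.
move=> cycle_pos; apply/le_anti; rewrite xiterS_le /= leNgt; apply/negP => dv.
have [es [sz des dl]] := drops_descending_path (m := 0) (k := #|~: VT|) dv.
have trace_nt := descending_trace_nontarget des (drops_nontarget dl).
have : ~~ uniq (v :: [seq e.2 | e <- es]).
  apply: contraTN isT => /(@uniq_size_le_card _ (~: VT)).
  by rewrite /= size_map sz ltnn; apply => w /(allP trace_nt); rewrite inE.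
case/trace_not_uniq_cycle=> es1 [cyc [es2 [def_es ne cl]]].
move: des; rewrite def_es !descending_cat => /and3P[_ dcyc _].
have cyc_cycle : is_cycle E (hlast v es1) cyc.
  by rewrite /is_cycle ne (descending_hist dcyc) cl eqxx.
have := cycle_pos _ _ cyc_cycle (descending_nontarget dcyc).
by rewrite ltNge (descending_cycle_weight_le0 dcyc cl).
Qed.

End ValueIteration.

Theorem proposition2 (V A : finType) (VMin VT : {set V}) (E : {set V * A * V})
    (omega : V * A * V -> int) (c : V -> int) :
  VT \subset VMin ->
  deadlock_free E ->
  deterministic E ->
  strongly_connected_induced E (~: VT) ->
  (forall (u : V) (es : seq (V * A * V)), is_cycle E u es ->
     all (fun e => e.1.1 \notin VT) es -> (0 < cycle_weight omega es)%R) ->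
  (forall v : V, game_value VMin VT E omega c v != +oo) ->
  let n := #|~: VT| in
  forall (k : nat) (v : V),
    xiter VMin VT E omega c (n + k) v = xiter VMin VT E omega c n v.
Proof.
move=> _ deadlock _ _ cycle_pos _ n.
have fixn : xiter VMin VT E omega c n.+1 = xiter VMin VT E omega c n.
  by apply: funext => v; apply: xiter_card_fixpoint.
clearbody n; elim=> [|k IH] v; first by rewrite addn0.
rewrite addnS /xiter iterS; rewrite /xiter in fixn IH.
by rewrite (funext IH) -iterS fixn.
Qed.
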